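(* There exists a function $f:\mathbb{N}\to\{-1,1\}$ with $f(1)=1$, $f(2)=1$, $f(3)=-1$, $f(5)=-1$, satisfying $f(2n)=f(2)f(n)$ and $f(3n)=f(3)f(n)$ for all $n\in\mathbb{N}$, such that for every integer $n\ge 0$ $$f(6n+1)+f(6n+2)+f(6n+3)=-\big(f(6n+4)+f(6n+5)+f(6n+6)\big)\in\{-1,1\}.$$ In particular $\sum_{n\le 6m} f(n)=0$ for every integer $m\ge 0$, and hence $\sum_{n\le x} f(n)=O(1)$.
   Context: Here $\mathbb{N}=\{1,2,3,\dots\}$. *)

(* f : nat -> int, only values at n >= 1 are constrained. *)
From mathcomp Require Import all_boot all_order all_algebra.

From mathcomp Require Import all_boot all_order all_algebra.
From mathcomp Require Import zify.
Import Order.TTheory GRing.Theory Num.Theory.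

(* The rules f(2n) = f(n) and f(3n) = -f(n)
   fix f on multiples of 2 and 3, so only the values at 6m+1 and 6m+5 are
   free.  In the block 6m+1, ..., 6m+6 the four "old" values
     a = f(3m+1), b = f(2m+1), c = f(3m+2), d = f(m+1)
   give f(6m+2) = a, f(6m+3) = -b, f(6m+4) = c, f(6m+6) = -d, and the two
   new values X = f(6m+1), Y = f(6m+5) are chosen from (a, b, c, d) so that
   the block is balanced.  This is possible unless (a, b, c, d) is "bad",
   i.e. a = c = -b = -d; we show by induction on m that the quadruple of the
   block m is never bad, since a bad quadruple at 2k or 2k+1 could only come
   from a bad quadruple at k; for m = 0 the choice gives f(1) = 1 and
   f(5) = -1, as required.  Balanced blocks make the partial sums vanish
   at every multiple of 6, and they stay within distance 5 in between. *)

Section BlockChoice.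

Definition sgb (b : bool) : int := if b then 1%R else (-1)%R.

Definition choose1 (a b c d : bool) : bool := if a != b then b else d.

Definition choose5 (a b c d : bool) : bool :=
  if a != b then (if c == d then b else a) else ~~ c.

Definition badb (a b c d : bool) : bool := [&& b == d, a != d & c != d].

Local Open Scope ring_scope.

Lemma choice_balances a b c d : ~~ badb a b c d ->
  let s := sgb (choose1 a b c d) + sgb a + sgb (~~ b) in
  s = - (sgb c + sgb (choose5 a b c d) + sgb (~~ d)) /\ (s = 1 \/ s = -1).
Proof. by case: a; case: b; case: c; case: d => //= _; lia. Qed.

(* The quadruple of block 2k is (choose1 ..., f(4k+1), a, b): never bad. *)
Lemma badb_choose1 a b c d e : ~~ badb (choose1 a b c d) e a b.
Proof. by case: a; case: b; case: c; case: d; case: e. Qed.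

(* The quadruple of block 2k+1 is (c, f(4k+3), choose5 ..., d): it can only
   be bad if (a, b, c, d) already is. *)
Lemma badb_choose5 a b c d e : badb c e (choose5 a b c d) d -> badb a b c d.
Proof. by case: a; case: b; case: c; case: d; case: e. Qed.

End BlockChoice.

Definition step (g : nat -> bool) (n : nat) : bool :=
  let m := n %/ 6 in
  if (n <= 1)%N then true
  else if n %% 2 == 0%N then g (n %/ 2)
  else if n %% 3 == 0%N then ~~ g (n %/ 3)
  else
    (if n %% 6 == 1%N then choose1 else choose5)
      (g (3 * m + 1)) (g (2 * m + 1)) (g (3 * m + 2)) (g (m + 1)).

Fixpoint gfuel (fuel n : nat) : bool :=
  if fuel is k.+1 then step (gfuel k) n else true.

(* Iterating the step n+1 times (from any start) determines the value at n. *)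
Definition g (n : nat) : bool := gfuel n.+1 n.

Lemma step_ext (g1 g2 : nat -> bool) n :
  (forall k, (k < n)%N -> g1 k = g2 k) -> step g1 n = step g2 n.
Proof.
move=> eq12; rewrite /step; case: ifP => // n_gt1.
case: ifP => n_odd; first by rewrite eq12 //; lia.
case: ifP => n_not3; first by rewrite eq12 //; lia.
by rewrite !eq12 //; lia.
Qed.

Lemma gfuel_stable f1 f2 n : (n < f1)%N -> (n < f2)%N -> gfuel f1 n = gfuel f2 n.
Proof.
elim: f1 f2 n => [|k1 IH] [|k2] n //= n_lt1 n_lt2.
by apply: step_ext => k lt_kn; apply: IH; lia.
Qed.

Lemma g_unfold n : g n = step g n.
Proof.
rewrite {1}/g /=; apply: step_ext => k lt_kn.
by rewrite /g; apply: gfuel_stable; lia.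
Qed.

Lemma g_double n : (0 < n)%N -> g (2 * n) = g n.
Proof.
move=> n_gt0; rewrite g_unfold /step.
have -> : (2 * n <= 1)%N = false by lia.
have -> : (2 * n) %% 2 = 0%N by lia.
by have -> : (2 * n) %/ 2 = n by lia.
Qed.

Lemma g_triple n : (0 < n)%N -> g (3 * n) = ~~ g n.
Proof.
elim/ltn_ind: n => n IH n_gt0.
have [n_odd | n_even] := boolP (odd n).
  have n_mod2 : n %% 2 = 1%N by rewrite modn2 n_odd.
  rewrite g_unfold /step.
  have -> : (3 * n <= 1)%N = false by lia.
  have -> : ((3 * n) %% 2 == 0)%N = false by lia.
  have -> : (3 * n) %% 3 = 0%N by lia.
  by have -> : (3 * n) %/ 3 = n by lia.
have n_eq : n = (2 * n./2)%N.
  by rewrite -[n in LHS](odd_double_half n) (negbTE n_even) add0n -mul2n.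
have -> : (3 * n = 2 * (3 * n./2))%N by lia.
rewrite g_double; last lia.
rewrite IH; try lia.
by rewrite [in RHS]n_eq g_double //; lia.
Qed.

Lemma g_6m1 m : g (6 * m + 1) =
  choose1 (g (3 * m + 1)) (g (2 * m + 1)) (g (3 * m + 2)) (g (m + 1)).
Proof.
case: m => [|m]; first by [].
rewrite g_unfold /step.
have -> : (6 * m.+1 + 1 <= 1)%N = false by lia.
have -> : ((6 * m.+1 + 1) %% 2 == 0)%N = false by lia.
have -> : ((6 * m.+1 + 1) %% 3 == 0)%N = false by lia.
have -> : ((6 * m.+1 + 1) %% 6 == 1)%N = true by lia.
by have -> : (6 * m.+1 + 1) %/ 6 = m.+1 by lia.
Qed.

Lemma g_6m5 m : g (6 * m + 5) =
  choose5 (g (3 * m + 1)) (g (2 * m + 1)) (g (3 * m + 2)) (g (m + 1)).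
Proof.
rewrite g_unfold /step.
have -> : (6 * m + 5 <= 1)%N = false by lia.
have -> : ((6 * m + 5) %% 2 == 0)%N = false by lia.
have -> : ((6 * m + 5) %% 3 == 0)%N = false by lia.
have -> : ((6 * m + 5) %% 6 == 1)%N = false by lia.
by have -> : (6 * m + 5) %/ 6 = m by lia.
Qed.

Definition bad (m : nat) : bool :=
  badb (g (3 * m + 1)) (g (2 * m + 1)) (g (3 * m + 2)) (g (m + 1)).

(* No block has a bad quadruple: block 2k never does, and block 2k+1 only
   if block k does. *)
Lemma not_bad m : ~~ bad m.
Proof.
elim/ltn_ind: m => m IH.
have [k [m_eq|m_eq]] : exists k, m = (2 * k)%N \/ m = (2 * k + 1)%N.
  by exists m./2; have := odd_double_half m; rewrite -muln2; case: (odd m) => /=; lia.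
all: subst m.
- rewrite /bad.
  have -> : (3 * (2 * k) + 1 = 6 * k + 1)%N by lia.
  have -> : (3 * (2 * k) + 2 = 2 * (3 * k + 1))%N by lia.
  rewrite g_6m1 g_double; last lia.
  exact: badb_choose1.
- apply/negP => bad_m; have /negP := IH k ltac:(lia); apply.
  move: bad_m; rewrite /bad.
  have -> : (2 * k + 1 + 1 = 2 * (k + 1))%N by lia.
  have -> : (3 * (2 * k + 1) + 1 = 2 * (3 * k + 2))%N by lia.
  have -> : (3 * (2 * k + 1) + 2 = 6 * k + 5)%N by lia.
  rewrite g_6m5 !g_double; try lia.
  exact: badb_choose5.
Qed.

Local Open Scope ring_scope.

Definition fsign (n : nat) : int := sgb (g n).

Lemma sgb_neg b : sgb (~~ b) = - sgb b.
Proof. by case: b. Qed.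

Lemma fsign_pm n : fsign n = 1 \/ fsign n = -1.
Proof. by rewrite /fsign; case: (g n); [left | right]. Qed.

Lemma block_balanced n :
  fsign (6 * n + 1)%N + fsign (6 * n + 2)%N + fsign (6 * n + 3)%N
    = - (fsign (6 * n + 4)%N + fsign (6 * n + 5)%N + fsign (6 * n + 6)%N) /\
  (fsign (6 * n + 1)%N + fsign (6 * n + 2)%N + fsign (6 * n + 3)%N = 1 \/
   fsign (6 * n + 1)%N + fsign (6 * n + 2)%N + fsign (6 * n + 3)%N = -1).
Proof.
have -> : (6 * n + 2 = 2 * (3 * n + 1))%N by lia.
have -> : (6 * n + 3 = 3 * (2 * n + 1))%N by lia.
have -> : (6 * n + 4 = 2 * (3 * n + 2))%N by lia.
have -> : (6 * n + 6 = 2 * (3 * (n + 1)))%N by lia.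
rewrite /fsign g_6m1 g_6m5 !g_double ?g_triple; try lia.
exact: choice_balances (not_bad n).
Qed.

Section PartialSums.

Variable u : nat -> int.

Definition psum (x : nat) : int := \sum_(1 <= k < x.+1) u k.

Lemma psum_step n j : psum (n + j.+1) = psum (n + j) + u (n + j.+1).
Proof. by rewrite addnS /psum big_nat_recr. Qed.

Lemma psum_blocks :
  (forall n, u (6 * n + 1)%N + u (6 * n + 2)%N + u (6 * n + 3)%N
             + (u (6 * n + 4)%N + u (6 * n + 5)%N + u (6 * n + 6)%N) = 0) ->
  forall m, psum (6 * m) = 0.
Proof.
move=> balanced; elim=> [|m IH]; first by rewrite /psum big_geq.
by rewrite mulnSr !psum_step addn0 IH; have := balanced m; lia.
Qed.

Hypothesis u_bounded : forall k, `|u k| <= 1.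

Lemma psum_drift n r : `|psum (n + r)| <= `|psum n| + r%:Z.
Proof.
elim: r => [|r IH]; first by rewrite addn0 addr0.
rewrite psum_step; apply: le_trans (ler_normD _ _) _.
by rewrite -(addn1 r) PoszD addrA lerD.
Qed.

Lemma psum_bounded :
  (forall m, psum (6 * m) = 0) -> forall x, `|psum x| <= 5.
Proof.
move=> psum6 x; rewrite (divn_eq x 6) mulnC.
apply: le_trans (psum_drift _ _) _.
by rewrite psum6 normr0 add0r lez_nat -ltnS ltn_pmod.
Qed.

End PartialSums.

Theorem mainTheorem2 :
  exists f : nat -> int,
    (forall n : nat, (0 < n)%N -> f n = 1 \/ f n = -1) /\
    f 1%N = 1 /\ f 2%N = 1 /\ f 3%N = -1 /\ f 5%N = -1 /\
    (forall n : nat, (0 < n)%N -> f (2 * n)%N = f 2%N * f n) /\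
    (forall n : nat, (0 < n)%N -> f (3 * n)%N = f 3%N * f n) /\
    (forall n : nat,
        f (6 * n + 1)%N + f (6 * n + 2)%N + f (6 * n + 3)%N
          = - (f (6 * n + 4)%N + f (6 * n + 5)%N + f (6 * n + 6)%N) /\
        (f (6 * n + 1)%N + f (6 * n + 2)%N + f (6 * n + 3)%N = 1 \/
         f (6 * n + 1)%N + f (6 * n + 2)%N + f (6 * n + 3)%N = -1)) /\
    (forall m : nat, \sum_(1 <= k < (6 * m).+1) f k = 0) /\
    (exists C : int, forall x : nat, `|\sum_(1 <= k < x.+1) f k| <= C).
Proof.
have f1 : fsign 1 = 1 by [].
have f5 : fsign 5 = -1 by [].
have f2 : fsign 2 = 1 by rewrite /fsign (g_double 1).
have f3 : fsign 3 = -1 by rewrite /fsign (g_triple 1).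
have fsign_norm k : `|fsign k| <= 1 by case: (fsign_pm k) => ->.
have psum6 : forall m, psum fsign (6 * m) = 0.
  by apply: psum_blocks => n; have [-> _] := block_balanced n; rewrite addNr.
exists fsign; split; first by move=> n _; apply: fsign_pm.
do 4!split => //.
split; first by move=> n n_gt0; rewrite f2 mul1r /fsign g_double.
split; first by move=> n n_gt0; rewrite f3 mulN1r /fsign g_triple // sgb_neg.
split; first exact: block_balanced.
split; first exact: psum6.
by exists 5; apply: psum_bounded.
Qed.
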